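(* Let $q$ be a prime power, $n\ge 0$, and $L_q^n$ the lattice of all subspaces of $\mathbb{F}_q^n$ ordered by inclusion and ranked by dimension. Then $$\mathcal{M}(L_q^n,t)=\sum_{0\le i\le j\le k\le n}(-1)^{k-i}\begin{bmatrix}n\\ i,\,j-i,\,k-j,\,n-k\end{bmatrix}_q q^{\binom{j-i}{2}+\binom{k-j}{2}}\,t^{3n-i-j-k}.$$
   Context: $\begin{bmatrix}n\\k\end{bmatrix}_q=\dfrac{(q^n-1)\cdots(q-1)}{(q^k-1)\cdots(q-1)\cdot(q^{n-k}-1)\cdots(q-1)}$ and $\begin{bmatrix}n\\k_1,\dots,k_m\end{bmatrix}_q=\begin{bmatrix}n\\k_1\end{bmatrix}_q\begin{bmatrix}n-k_1\\k_2\end{bmatrix}_q\cdots\begin{bmatrix}n-(k_1+\cdots+k_{m-1})\\k_m\end{bmatrix}_q$. For a finite ranked poset $\mathcal{P}$, $\rho(x,y,z)=3\,\mathrm{rk}(\mathcal{P})-\mathrm{rk}(x)-\mathrm{rk}(y)-\mathrm{rk}(z)$, $\delta_3(x,y,z)=1$ if $x=y=z$ and $0$ otherwise, $J$ is the unique integer-valued function on triples $x\le y\le z$ with $\sum_{x\le a\le y\le b\le z}J(a,y,b)=\delta_3(x,y,z)$ for all $x\le y\le z$, and $\mathcal{M}(\mathcal{P},t)=\sum_{x\le y\le z}J(x,y,z)\,t^{\rho(x,y,z)}$. *)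

From HB Require Import structures.
From mathcomp Require Import all_boot all_order all_algebra all_field.
Set Implicit Arguments. Unset Strict Implicit. Unset Printing Implicit Defensive.
Import Order.TTheory GRing.Theory Num.Theory.
Local Open Scope ring_scope.

Section RankedPoset.
Variables (T : finType) (le : rel T) (rk : T -> nat).

Definition poset_rank : nat := (\max_(x : T) rk x)%N.

Definition rho3 (x y z : T) : nat := (3 * poset_rank - rk x - rk y - rk z)%N.

Definition delta3 (x y z : T) : int := ((x == y) && (y == z))%:R.

(* J satisfies the defining relation:
   for all x <= y <= z,  sum_{x <= a <= y <= b <= z} J(a,y,b) = delta3(x,y,z).
   J is only meaningful on triples x <= y <= z. *)
Definition J_spec (J : T -> T -> T -> int) : Prop :=
  forall x y z, le x y -> le y z ->
    \sum_(a : T | le x a && le a y) \sum_(b : T | le y b && le b z) J a y b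
      = delta3 x y z.

Definition Mpoly (J : T -> T -> T -> int) : {poly int} :=
  \sum_(x : T) \sum_(y : T | le x y) \sum_(z : T | le y z)
     J x y z *: 'X^(rho3 x y z).
End RankedPoset.

Definition qfact (q : nat) (n : nat) : rat :=
  \prod_(1 <= i < n.+1) ((q ^ i)%:R - 1).

Definition qbinom (q n k : nat) : rat :=
  qfact q n / (qfact q k * qfact q (n - k)).

Fixpoint qmultinom (q n : nat) (ks : seq nat) : rat :=
  match ks with
  | [::] => 1
  | k :: ks' => qbinom q n k * qmultinom q (n - k) ks'
  end.

(* {vspace 'rV[F]_n} is the type of subspaces of F^n; for a finite field
   it is a finite type. *)
Import VectorInternalTheory.
HB.instance Definition _ (F : finFieldType) (n : nat) :=
  [Finite of {vspace 'rV[F]_n} by <:].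

Definition subspace_le (F : finFieldType) (n : nat) : rel {vspace 'rV[F]_n} :=
  fun U V => (U <= V)%VS.

Definition subspace_rk (F : finFieldType) (n : nat) : {vspace 'rV[F]_n} -> nat :=
  fun U => \dim U.

From HB Require Import structures.
From mathcomp Require Import all_boot all_order all_algebra all_field.
From mathcomp Require Import ring zify.
Set Implicit Arguments.
Unset Strict Implicit.
Unset Printing Implicit Defensive.

Import Order.TTheory GRing.Theory Num.Theory.
Local Open Scope ring_scope.

(* The defining relation of J factors through the Moebius function of the
   subspace lattice, mu(a, b) = (-1)^d q^(d choose 2) with d = dim b - dim a:
   J(a, y, b) = mu(a, y) mu(y, b) satisfies it, and the relation determines J
   by induction on dim z - dim x.  The Moebius identities are the q-binomial
   theorem at -1, because the subspaces of dimension k between x and y number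
   [dim y - dim x; k - dim x]_q (count ordered partial bases in two ways).
   Grouping the chains x <= y <= z by their dimensions i <= j <= k, there are
   [n; i, j - i, k - j, n - k]_q of each type, which gives the formula. *)

Section IntervalTriples.
Variables (T : finType) (le : rel T).

Lemma J_spec_mobius_product (mu : T -> T -> int) :
  (forall x y, le x y -> \sum_(a | le x a && le a y) mu a y = (x == y)%:R) ->
  (forall y z, le y z -> \sum_(b | le y b && le b z) mu y b = (y == z)%:R) ->
  J_spec le (fun a y b => mu a y * mu y b).
Proof.
move=> muL muR x y z xy yz; under eq_bigr do rewrite -mulr_sumr.
by rewrite -mulr_suml muL // muR // /delta3 -natrM mulnb.
Qed.

Variable rk : T -> nat.
Hypothesis le_refl : reflexive le.
Hypothesis rk_lt : forall {x y}, le x y -> x != y -> (rk x < rk y)%N.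

Lemma rk_le [x y] : le x y -> (rk x <= rk y)%N.
Proof. by move=> xy; have [-> //|/(rk_lt xy)/ltnW] := eqVneq x y. Qed.

(* Induction on [rk z - rk x]: in the relation for [x <= y <= z] every term
   other than [D x z] belongs to a strictly shorter interval. *)
Lemma interval_double_sums_eq0 (V : zmodType) (y : T) (D : T -> T -> V) :
    (forall x z, le x y -> le y z ->
       \sum_(a | le x a && le a y) \sum_(b | le y b && le b z) D a b = 0) ->
  forall x z, le x y -> le y z -> D x z = 0.
Proof.
move=> D0; suff Dt t x z : (rk z - rk x < t)%N -> le x y -> le y z -> D x z = 0.
  by move=> x z; apply: Dt (ltnSn _).
elim: t x z => [//|t IH] x z ht xy yz; have := D0 x z xy yz.
have [rxy ryz] := (rk_le xy, rk_le yz).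
rewrite (bigD1 x) ?le_refl ?xy //= (bigD1 z) ?le_refl ?yz //=.
have -> : \sum_(b | (le y b && le b z) && (b != z)) D x b = 0.
  apply: big1 => b /andP[/andP[yb bz] bz']; apply: IH => //.
  by have := rk_lt bz bz'; have := rk_le yb; lia.
have -> : \sum_(a | (le x a && le a y) && (a != x))
            \sum_(b | le y b && le b z) D a b = 0.
  apply: big1 => a /andP[/andP[xa ay] ax]; apply: big1 => b /andP[yb bz].
  apply: IH => //; rewrite eq_sym in ax.
  by have := rk_lt xa ax; have := rk_le ay; have := rk_le yb; have := rk_le bz; lia.
by rewrite !addr0.
Qed.

Lemma J_spec_unique (J1 J2 : T -> T -> T -> int) :
    J_spec le J1 -> J_spec le J2 ->
  forall x y z, le x y -> le y z -> J1 x y z = J2 x y z.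
Proof.
move=> J1spec J2spec x y z xy yz; apply/eqP; rewrite -subr_eq0; apply/eqP.
apply: (@interval_double_sums_eq0 _ y (fun a b => J1 a y b - J2 a y b)) xy yz.
move=> {}x {}z xy yz; under eq_bigr do rewrite sumrB.
by rewrite sumrB J1spec // J2spec // subrr.
Qed.

End IntervalTriples.

Section GaussianBinomial.
Variable q : nat.
Hypothesis q_gt1 : (1 < q)%N.

Lemma expn_sub1_neq0 m : (0 < m)%N -> ((q ^ m)%:R - 1 : rat) != 0.
Proof. by move=> m_gt0; rewrite subr_eq0 pnatr_eq1 -(expn0 q) eqn_exp2l // -lt0n. Qed.

Lemma qfact0 : qfact q 0 = 1.
Proof. by rewrite /qfact big_nil. Qed.

Lemma qfactS m : qfact q m.+1 = qfact q m * ((q ^ m.+1)%:R - 1).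
Proof. by rewrite /qfact big_nat_recr. Qed.

Lemma qfact_neq0 m : qfact q m != 0.
Proof.
elim: m => [|m IH]; first by rewrite qfact0 oner_neq0.
by rewrite qfactS mulf_neq0 ?expn_sub1_neq0.
Qed.

Lemma qbinom0 m : qbinom q m 0 = 1.
Proof. by rewrite /qbinom subn0 qfact0 mul1r divff ?qfact_neq0. Qed.

Lemma qbinomnn m : qbinom q m m = 1.
Proof. by rewrite /qbinom subnn qfact0 mulr1 divff ?qfact_neq0. Qed.

Lemma qbinom_sub m k : (k <= m)%N -> qbinom q m (m - k) = qbinom q m k.
Proof. by move=> km; rewrite /qbinom subKn // [qfact q k * _]mulrC. Qed.

Lemma qbinomS m k : (k < m)%N ->
  qbinom q m.+1 k.+1 = (q ^ (m - k))%:R * qbinom q m k + qbinom q m k.+1.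
Proof.
move=> km; rewrite /qbinom subSS.
have m_k : (m - k = (m - k.+1).+1)%N by lia.
have qm : (q ^ m.+1 = q ^ (m - k) * q ^ k.+1)%N by rewrite -expnD addnS subnK // ltnW.
rewrite !qfactS m_k qfactS -m_k qm natrM.
have qmk : ((q ^ (m - k))%:R - 1 : rat) != 0 by rewrite expn_sub1_neq0 ?subn_gt0.
have qk : ((q ^ k.+1)%:R - 1 : rat) != 0 by rewrite expn_sub1_neq0.
by field; rewrite qmk qk !qfact_neq0.
Qed.

Lemma qmultinom_flag n i j k : (i <= j <= k)%N -> (k <= n)%N ->
  qmultinom q n [:: i; (j - i)%N; (k - j)%N; (n - k)%N]
    = qbinom q n i * qbinom q (n - i)%N (j - i)%N * qbinom q (n - j)%N (k - j)%N.
Proof.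
move=> /andP[ij jk] kn /=.
have [-> ->] : (n - i - (j - i) = n - j /\ n - j - (k - j) = n - k)%N by lia.
by rewrite qbinomnn !mulr1 mulrA.
Qed.

Lemma prod_expn_sub1 m s : (s <= m)%N ->
  \prod_(i < s) ((q ^ (m - i))%:R - 1 : rat) = qfact q m / qfact q (m - s)%N.
Proof.
elim: s => [_|s IH sm]; first by rewrite big_ord0 subn0 divff ?qfact_neq0.
have m_s : (m - s = (m - s.+1).+1)%N by lia.
rewrite big_ord_recr IH ?(ltnW sm) //= m_s qfactS -m_s.
by field; rewrite expn_sub1_neq0 ?subn_gt0 // qfact_neq0.
Qed.

Lemma prod_expn_sub1_qbinom m s : (s <= m)%N ->
  \prod_(i < s) ((q ^ (m - i))%:R - 1 : rat)
    = qbinom q m s * \prod_(i < s) ((q ^ (s - i))%:R - 1).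
Proof.
move=> sm; rewrite !prod_expn_sub1 // subnn qfact0 /qbinom.
by field; rewrite !qfact_neq0.
Qed.

Lemma natr_prod_expn_diff r m s : (s <= m)%N ->
  ((\prod_(i < s) (q ^ (r + m) - q ^ (r + i)))%N%:R : rat)
    = (\prod_(i < s) q ^ (r + i))%N%:R * \prod_(i < s) ((q ^ (m - i))%:R - 1).
Proof.
move=> sm; rewrite !natr_prod -big_split /=; apply: eq_bigr => i _.
have im : (i <= m)%N by apply: leq_trans (ltnW (ltn_ord i)) sm.
rewrite natrB; last by rewrite leq_pexp2l ?(ltnW q_gt1) // leq_add2l.
have -> : (r + m = r + i + (m - i))%N by lia.
by rewrite expnD natrM mulrBr mulr1.
Qed.

Definition qmobius {R : pzRingType} (d : nat) : R := (-1) ^+ d * (q ^ 'C(d, 2))%:R.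

Lemma intr_qmobius d : (qmobius d : int)%:~R = qmobius d :> rat.
Proof. by rewrite /qmobius rmorphM rmorphXn rmorphN1 rmorph_nat. Qed.

Lemma qmobius0 : qmobius 0 = 1 :> rat.
Proof. by rewrite /qmobius expr0 mul1r. Qed.

Lemma qmobiusS d : qmobius d.+1 = - (q ^ d)%:R * qmobius d :> rat.
Proof. by rewrite /qmobius binS bin1 exprS expnD natrM; ring. Qed.

(* The q-binomial theorem at [x = -1]. *)
Lemma sum_qbinom_qmobius m :
  \sum_(j < m.+1) qbinom q m j * qmobius j = \prod_(i < m) (1 - (q ^ i)%:R).
Proof.
elim: m => [|m IH]; first by rewrite big_ord1 qbinom0 qmobius0 mulr1 big_ord0.
rewrite [RHS]big_ord_recr /= -IH; set g := \sum_(j < m.+1) _.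
have g_last : \sum_(i < m) qbinom q m i * qmobius i = g - qmobius m.
  by rewrite /g big_ord_recr qbinomnn mul1r addrK.
have g_first : \sum_(i < m) qbinom q m i.+1 * qmobius i.+1 = g - 1.
  by rewrite /g big_ord_recl qbinom0 qmobius0 mulr1 addrC addKr.
have g_scaled : \sum_(i < m) (q ^ (m - i))%:R * qbinom q m i * qmobius i.+1
                 = - (q ^ m)%:R * (g - qmobius m).
  rewrite -g_last mulr_sumr; apply: eq_bigr => i _.
  have -> : (q ^ m = q ^ (m - i) * q ^ i)%N by rewrite -expnD subnK // ltnW.
  by rewrite qmobiusS natrM; ring.
rewrite big_ord_recl big_ord_recr qbinom0 qbinomnn qmobius0 /=.
under eq_bigr => i _ do rewrite /bump add1n qbinomS // mulrDl.
by rewrite big_split /= g_scaled g_first /bump add1n qmobiusS; ring.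
Qed.

Lemma sum_qbinom_qmobius_delta m :
  \sum_(j < m.+1) qbinom q m j * qmobius j = (m == 0)%:R.
Proof.
rewrite sum_qbinom_qmobius; case: m => [|m]; first by rewrite big_ord0.
by rewrite big_ord_recl expn0 subrr mul0r.
Qed.

Lemma sum_qbinom_qmobius_rev_delta m :
  \sum_(j < m.+1) qbinom q m j * qmobius (m - j) = (m == 0)%:R.
Proof.
rewrite -sum_qbinom_qmobius_delta (reindex_inj rev_ord_inj) /=.
by apply: eq_bigr => j _; rewrite subSS subKn ?qbinom_sub // -ltnS.
Qed.

End GaussianBinomial.

Lemma dim_addv_line (K : fieldType) (vT : vectType K) (U : {vspace vT}) (v : vT) :
  v \notin U -> \dim (U + <[v]>) = (\dim U).+1.
Proof.
move=> vU; have v_neq0 : v != 0 by apply: contraNneq vU => ->; rewrite mem0v.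
rewrite dimv_disjoint_sum ?dim_vline ?v_neq0 ?addn1 //.
apply/eqP; rewrite -subv0; apply/subvP => x /memv_capP[xU /vlineP[k x_kv]].
move: xU; rewrite {x}x_kv.
have [-> _|k_neq0 kvU] := eqVneq k 0; first by rewrite scale0r mem0v.
by case/negP: vU; rewrite -(scalerK k_neq0 v) memvZ.
Qed.

Lemma dimv_ltn (K : fieldType) (vT : vectType K) (U V : {vspace vT}) :
  (U <= V)%VS -> U != V -> (\dim U < \dim V)%N.
Proof. by move=> UV; apply: contraNT; rewrite -leqNgt => dimVU; rewrite eqEdim UV. Qed.

Section SubspaceLattice.
Variables (F : finFieldType) (n : nat).
Local Notation V := 'rV[F]_n.
Local Notation T := {vspace V}.
Local Notation q := #|F|.

Lemma card_vspace_diff (u y : T) : (u <= y)%VS ->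
  #|[pred v : V | (v \in y) && (v \notin u)]| = (q ^ \dim y - q ^ \dim u)%N.
Proof.
move=> uy; rewrite -!card_vspace -(cardID (mem u) (mem y)).
have -> : #|[predI mem y & mem u]| = #|u|.
  by apply: eq_card => v; rewrite !inE andb_idl // => /(subvP uy).
by rewrite addKn; apply: eq_card => v; rewrite !inE andbC.
Qed.

Let q_gt1 : (1 < q)%N := finNzRing_gt1 F.

(* [nframes y u s] counts the sequences [v_1, ..., v_s] of vectors of [y] in
   which no [v_i] lies in [u + <[v_1, ..., v_(i-1)]>]. *)
Fixpoint nframes (y u : T) (s : nat) : nat :=
  if s is s'.+1 then
    \sum_(v : V | (v \in y) && (v \notin u)) nframes y (u + <[v]>)%VS s'
  else 1%N.

Lemma nframesE (y u : T) s : (u <= y)%VS ->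
  nframes y u s = (\prod_(i < s) (q ^ \dim y - q ^ (\dim u + i)))%N.
Proof.
elim: s u => [|s IH] u uy /=; first by rewrite big_ord0.
rewrite big_ord_recl addn0 -card_vspace_diff // -sum1_card big_distrl /=.
apply: eq_bigr => v /andP[vy vu]; rewrite mul1n IH ?subv_add ?uy -?memvE //.
by rewrite dim_addv_line //; apply: eq_bigr => i _; rewrite addSnnS.
Qed.

Lemma nframes_partition (y u : T) s : (u <= y)%VS ->
  nframes y u s =
    (\sum_(a : T | (u <= a <= y)%VS && (\dim a == \dim u + s)) nframes a u s)%N.
Proof.
elim: s u => [|s IH] u uy.
  rewrite (big_pred1 u) // => a; rewrite addn0 /=.
  apply/andP/eqP => [[/andP[ua _] /eqP da]|->]; last by rewrite subvv uy.
  by apply/eqP; rewrite eq_sym eqEdim ua da leqnn.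
have extend v : (v \in y) && (v \notin u) ->
    nframes y (u + <[v]>) s = (\sum_(a : T | (u + <[v]> <= a <= y)%VS
                          && (\dim a == \dim (u + <[v]>) + s)) nframes a (u + <[v]>) s)%N.
  by move=> /andP[vy vu]; rewrite IH // subv_add uy -memvE.
rewrite /= (eq_bigr _ extend).
rewrite (exchange_big_dep (fun a => (u <= a <= y)%VS && (\dim a == \dim u + s.+1)%N)) /=.
  apply: eq_bigr => a /andP[/andP[ua ay] /eqP da]; apply: eq_bigl => v.
  rewrite subv_add ua -memvE ay andbT /=.
  have [vu|vu] := boolP (v \in u); first by rewrite !andbF.
  rewrite dim_addv_line // da addSnnS eqxx !andbT.
  by apply/andP/idP => [[]//|va]; split=> //; apply: (subvP ay).
move=> v a /andP[vy vu] /andP[/andP[+ ay] /eqP da].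
by rewrite subv_add ay da dim_addv_line // => /andP[-> _]; rewrite addSnnS eqxx.
Qed.

Definition subspaces_between (x y : T) (k : nat) : pred T :=
  [pred a | (x <= a <= y)%VS && (\dim a == k)].

Lemma card_subspaces_between (x y : T) k :
  (x <= y)%VS -> (\dim x <= k <= \dim y)%N ->
  #|subspaces_between x y k|%:R = qbinom q (\dim y - \dim x) (k - \dim x).
Proof.
move=> xy /andP[xk ky]; set r := \dim x; set m := (\dim y - r)%N.
set s := (k - r)%N; have sm : (s <= m)%N by rewrite leq_sub2r.
have [dy dk] : \dim y = (r + m)%N /\ k = (r + s)%N by rewrite !subnKC ?dimvS.
have frames_y : nframes y x s
    = (#|subspaces_between x y k| * \prod_(i < s) (q ^ k - q ^ (r + i)))%N.
  rewrite nframes_partition // -dk -sum_nat_const.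
  by apply: eq_big => // a /andP[/andP[xa _] /eqP da]; rewrite nframesE // da.
have A_neq0 : (\prod_(i < s) q ^ (r + i))%N%:R != 0 :> rat.
  by rewrite pnatr_eq0 -lt0n prodn_gt0 // => i; rewrite expn_gt0 ltnW ?q_gt1.
have P_neq0 : \prod_(i < s) ((q ^ (s - i))%:R - 1) != 0 :> rat.
  by apply/prodf_neq0 => i _; rewrite expn_sub1_neq0 ?q_gt1 ?subn_gt0.
move: frames_y => /(congr1 (fun N => N%:R : rat)).
rewrite nframesE // natrM dy {2}dk !natr_prod_expn_diff ?q_gt1 //.
rewrite prod_expn_sub1_qbinom ?q_gt1 // mulrCA => eq_frames.
exact/esym/(mulIf (mulf_neq0 A_neq0 P_neq0)).
Qed.

Lemma sum_subspaces_by_dim (W : nmodType) (x y : T) (g : nat -> W) :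
  (x <= y)%VS ->
  \sum_(a | (x <= a <= y)%VS) g (\dim a)
    = \sum_(\dim x <= k < (\dim y).+1) g k *+ #|subspaces_between x y k|.
Proof.
move=> xy.
transitivity (\sum_(a | (x <= a <= y)%VS)
                \sum_(\dim x <= k < (\dim y).+1) if k == \dim a then g k else 0).
  apply: eq_bigr => a /andP[xa ay]; rewrite (bigD1_seq (\dim a)) /=; last first.
  - exact: iota_uniq.
  - by rewrite mem_index_iota ltnS !dimvS.
  by rewrite eqxx big1 ?addr0 // => k /negPf ->.
rewrite exchange_big; apply: eq_bigr => k _; rewrite -big_mkcondr -sumr_const.
by apply: eq_bigl => a; rewrite !inE eq_sym.
Qed.

Lemma sum_subspaces_by_dim_qbinom (W : lmodType rat) (x y : T) (g : nat -> W) :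
  (x <= y)%VS ->
  \sum_(a | (x <= a <= y)%VS) g (\dim a)
    = \sum_(\dim x <= k < (\dim y).+1) qbinom q (\dim y - \dim x) (k - \dim x) *: g k.
Proof.
move=> xy; rewrite sum_subspaces_by_dim //; apply: eq_big_nat => k xky.
by rewrite -scaler_nat card_subspaces_between // -ltnS.
Qed.

Lemma sum_subspaces_by_codim (x y : T) (g : nat -> rat) : (x <= y)%VS ->
  \sum_(a | (x <= a <= y)%VS) g (\dim a - \dim x)%N
    = \sum_(i < (\dim y - \dim x).+1) qbinom q (\dim y - \dim x) i * g i.
Proof.
move=> xy; rewrite (sum_subspaces_by_dim (fun k => g (k - \dim x)%N)) //.
rewrite -{1}(add0n (\dim x)) big_addn big_mkord subSn ?dimvS //.
apply: eq_bigr => i _; rewrite -mulr_natl card_subspaces_between ?addnK //.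
by have := ltn_ord i; have := dimvS xy; lia.
Qed.

Lemma sum_qmobius_subspaces_left (x y : T) : (x <= y)%VS ->
  \sum_(a | (x <= a <= y)%VS) qmobius q (\dim y - \dim a) = (x == y)%:R :> int.
Proof.
move=> xy; apply: (@intr_inj rat); rewrite rmorph_sum rmorph_nat /=.
have -> : (x == y) = (\dim y - \dim x == 0)%N by rewrite eqEdim xy subn_eq0.
rewrite -(sum_qbinom_qmobius_rev_delta q_gt1).
rewrite -(sum_subspaces_by_codim (fun i => qmobius q (\dim y - \dim x - i)) xy).
apply: eq_bigr => a /andP[xa ay]; rewrite intr_qmobius.
have [dxa day] := (dimvS xa, dimvS ay).
by have -> : (\dim y - \dim a = \dim y - \dim x - (\dim a - \dim x))%N by lia.
Qed.

Lemma sum_qmobius_subspaces_right (y z : T) : (y <= z)%VS ->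
  \sum_(b | (y <= b <= z)%VS) qmobius q (\dim b - \dim y) = (y == z)%:R :> int.
Proof.
move=> yz; apply: (@intr_inj rat); rewrite rmorph_sum rmorph_nat /=.
have -> : (y == z) = (\dim z - \dim y == 0)%N by rewrite eqEdim yz subn_eq0.
rewrite -(sum_qbinom_qmobius_delta q_gt1) -(sum_subspaces_by_codim (qmobius q) yz).
by apply: eq_bigr => b _; rewrite intr_qmobius.
Qed.

Lemma dim_fullv : \dim (fullv : T) = n.
Proof. by rewrite dimvf dim_matrix mul1r. Qed.

Lemma poset_rank_subspaces : poset_rank (@subspace_rk F n) = n.
Proof.
apply/eqP; rewrite eqn_leq; apply/andP; split.
  by apply/bigmax_leqP => x _; rewrite -[leqRHS]dim_fullv dimvS ?subvf.
by apply: leq_trans (leq_bigmax (fullv : T)); rewrite /subspace_rk dim_fullv.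
Qed.

Lemma sum_subspace_flags (W : lmodType rat) (g : nat -> nat -> nat -> W) :
  \sum_(x : T) \sum_(y : T | (x <= y)%VS) \sum_(z : T | (y <= z)%VS)
      g (\dim x) (\dim y) (\dim z)
    = \sum_(0 <= i < n.+1) \sum_(i <= j < n.+1) \sum_(j <= k < n.+1)
        qmultinom q n [:: i; (j - i)%N; (k - j)%N; (n - k)%N] *: g i j k.
Proof.
have sum_above (a : T) (h : nat -> W) : \sum_(b | (a <= b)%VS) h (\dim b)
    = \sum_(\dim a <= k < n.+1) qbinom q (n - \dim a) (k - \dim a) *: h k.
  transitivity (\sum_(b | (a <= b <= fullv)%VS) h (\dim b)).
    by apply: eq_bigl => b; rewrite subvf andbT.
  by rewrite sum_subspaces_by_dim_qbinom ?subvf // dim_fullv.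
pose gz i j := \sum_(j <= k < n.+1) qbinom q (n - j) (k - j) *: g i j k.
pose gy i := \sum_(i <= j < n.+1) qbinom q (n - i) (j - i) *: gz i j.
transitivity (\sum_(x : T) gy (\dim x)).
  apply: eq_bigr => x _; rewrite /gy -(sum_above x (gz (\dim x))).
  by apply: eq_bigr => y _; rewrite (sum_above y (g (\dim x) (\dim y))).
transitivity (\sum_(x : T | (0 <= x <= fullv)%VS) gy (\dim x)).
  by apply: eq_bigl => x; rewrite sub0v subvf.
rewrite sum_subspaces_by_dim_qbinom ?sub0v // dimv0 dim_fullv.
apply: eq_big_nat => i /andP[_ ilen]; rewrite subn0 scaler_sumr.
apply: eq_big_nat => j /andP[ij jlen]; rewrite scaler_sumr !scaler_sumr.
apply: eq_big_nat => k /andP[jk klen]; rewrite !scalerA subn0.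
by rewrite qmultinom_flag ?q_gt1 ?ij // -ltnS.
Qed.

Lemma map_Mpoly_subspaces (J : T -> T -> T -> int) (c : nat -> nat -> nat -> int) :
  (forall x y z, (x <= y)%VS -> (y <= z)%VS ->
     J x y z = c (\dim x) (\dim y) (\dim z)) ->
  map_poly (fun z : int => z%:~R : rat) (Mpoly (@subspace_le F n) (@subspace_rk F n) J)
    = \sum_(0 <= i < n.+1) \sum_(i <= j < n.+1) \sum_(j <= k < n.+1)
        (qmultinom q n [:: i; (j - i)%N; (k - j)%N; (n - k)%N] * (c i j k)%:~R)
          *: 'X^(3 * n - i - j - k).
Proof.
move=> Jc; pose g i j k : {poly rat} := (c i j k)%:~R *: 'X^(3 * n - i - j - k).
transitivity (\sum_(x : T) \sum_(y : T | (x <= y)%VS) \sum_(z : T | (y <= z)%VS)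
                g (\dim x) (\dim y) (\dim z)).
  rewrite /Mpoly rmorph_sum; apply: eq_bigr => x _; rewrite rmorph_sum.
  apply: eq_bigr => y xy; rewrite rmorph_sum; apply: eq_bigr => z yz.
  by rewrite /= map_polyZ map_polyXn Jc // /rho3 poset_rank_subspaces.
rewrite sum_subspace_flags.
by do 3!apply: eq_bigr => ? _; rewrite scalerA.
Qed.

End SubspaceLattice.

Theorem proposition6p12 (F : finFieldType) (n : nat) :
  let q := #|F| in
  let T := {vspace 'rV[F]_n} in
  (exists J : T -> T -> T -> int,
      J_spec (@subspace_le F n) J) /\
  (forall J : T -> T -> T -> int,
      J_spec (@subspace_le F n) J ->
      map_poly (fun z : int => z%:~R : rat)
        (Mpoly (@subspace_le F n) (@subspace_rk F n) J)
      = \sum_(0 <= i < n.+1) \sum_(i <= j < n.+1) \sum_(j <= k < n.+1)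
          ((-1) ^+ (k - i)%N * qmultinom q n [:: i; (j - i)%N; (k - j)%N; (n - k)%N]
            * (q ^ ('C(j - i, 2) + 'C(k - j, 2)))%:R) *: 'X^(3 * n - i - j - k)).
Proof.
move=> q T; pose mu (a b : T) : int := qmobius q (\dim b - \dim a).
have mu_spec : J_spec (@subspace_le F n) (fun a y b => mu a y * mu y b).
  exact: J_spec_mobius_product (@sum_qmobius_subspaces_left F n)
                               (@sum_qmobius_subspaces_right F n).
split; first by exists (fun a y b => mu a y * mu y b).
move=> J J_spec_J.
rewrite (map_Mpoly_subspaces (c := fun i j k => qmobius q (j - i) * qmobius q (k - j))).
  apply: eq_big_nat => i _; apply: eq_big_nat => j /andP[ij _].
  apply: eq_big_nat => k /andP[jk _]; rewrite /= rmorphM /= !intr_qmobius /qmobius.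
  have -> : (k - i = (j - i) + (k - j))%N by lia.
  by congr (_ *: _); rewrite -/q exprD expnD natrM; ring.
move=> x y z xy yz.
apply: (J_spec_unique (rk := @subspace_rk F n) _ _ J_spec_J mu_spec xy yz).
  exact: subvv.
exact: dimv_ltn.
Qed.
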